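(* Let $\mathcal{G}=(\mathcal{A},\phi)$ be a $\mathrm{PLTL}_{\mathbf{G}}$ game with $\mathrm{var}(\phi)\neq\emptyset$. For $y\in\mathrm{var}(\phi)$ let $\phi_y$ be the formula obtained from $\phi$ by inductively replacing every subformula $\mathbf{G}_{\le z}\psi$ with $z\neq y$ by $\psi$, and let $\mathcal{G}_y=(\mathcal{A},\phi_y)$. Then $\mathcal{W}^0_{\mathcal{G}}$ is infinite if and only if there exists $y\in\mathrm{var}(\phi)$ such that $\mathcal{W}^0_{\mathcal{G}_y}$ contains every valuation $\{y\}\to\mathbb{N}$ (or $\mathrm{var}(\phi_y)=\emptyset$ and Player 0 wins $\mathcal{G}_y$). Moreover, if $\phi$ is a PLTL formula containing at least one operator $\mathbf{F}_{\le x}$, then $\mathcal{W}^0_{(\mathcal{A},\phi)}$ is infinite if and only if it is non-empty.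
   Context: PLTL formulae over atomic propositions $P$ and disjoint variable sets $\mathcal{X},\mathcal{Y}$: $\phi::= p\mid\neg p\mid\phi\wedge\phi\mid\phi\vee\phi\mid\mathbf{X}\phi\mid\phi\mathbf{U}\phi\mid\phi\mathbf{R}\phi\mid\mathbf{F}_{\le x}\phi\mid\mathbf{G}_{\le y}\phi$ ($x\in\mathcal{X}$, $y\in\mathcal{Y}$), with LTL semantics for unparameterized operators and, w.r.t. $\alpha\colon\mathcal{X}\cup\mathcal{Y}\to\mathbb{N}$: $\mathbf{F}_{\le x}\phi$ holds at $i$ iff $\phi$ holds at some $i+j$, $0\le j\le\alpha(x)$; $\mathbf{G}_{\le y}\phi$ holds at $i$ iff $\phi$ holds at all $i+j$, $0\le j\le\alpha(y)$. $\phi$ is $\mathrm{PLTL}_{\mathbf{G}}$ if $\mathrm{var}(\phi)\subseteq\mathcal{Y}$. In the game $(\mathcal{A},\phi)$ on a finite arena $\mathcal{A}=(V,V_0,V_1,E,v_0,\ell)$, Player 0 wins a play $\rho$ w.r.t. $\alpha$ iff $(\ell(\rho_0)\ell(\rho_1)\cdots,0,\alpha)\models\phi$. $\mathcal{W}^0_{\mathcal{G}}$ is the set of valuations $\alpha\colon\mathrm{var}(\phi)\to\mathbb{N}$ for which Player 0 has a strategy winning every consistent play w.r.t. $\alpha$. *)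

From mathcomp Require Import all_boot.
From Stdlib Require List.
Set Implicit Arguments. Unset Strict Implicit. Unset Printing Implicit Defensive.

(* PLTL formulae over atomic propositions P and variable types X (for F_{<=x})
   and Y (for G_{<=y}); disjointness of the two variable sets is built in by
   using separate types. *)
Inductive pltl (P : Type) (X Y : eqType) : Type :=
| PAtom  of P
| PNAtom of P
| PAnd   of pltl P X Y & pltl P X Y
| POr    of pltl P X Y & pltl P X Y
| PNext  of pltl P X Y
| PUntil of pltl P X Y & pltl P X Y
| PRel   of pltl P X Y & pltl P X Y
| PFle   of X & pltl P X Y
| PGle   of Y & pltl P X Y.

Arguments PAtom {P X Y}. Arguments PNAtom {P X Y}.

Section PLTL.
Variables (P : Type) (X Y : eqType).
Notation form := (pltl P X Y).

Fixpoint vars (f : form) : seq (X + Y)%type :=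
  match f with
  | PAtom _ | PNAtom _ => [::]
  | PAnd a b | POr a b | PUntil a b | PRel a b => vars a ++ vars b
  | PNext a => vars a
  | PFle x a => inl x :: vars a
  | PGle y a => inr y :: vars a
  end.

Fixpoint sat (w : nat -> P -> bool) (al : (X + Y)%type -> nat) (f : form) (i : nat)
  : Prop :=
  match f with
  | PAtom p => w i p
  | PNAtom p => ~~ w i p
  | PAnd a b => sat w al a i /\ sat w al b i
  | POr a b => sat w al a i \/ sat w al b i
  | PNext a => sat w al a i.+1
  | PUntil a b => exists k, i <= k /\ sat w al b k /\
                    (forall j, i <= j -> j < k -> sat w al a j)
  | PRel a b => forall k, i <= k -> sat w al b k \/
                    (exists j, i <= j /\ j < k /\ sat w al a j)
  | PFle x a => exists j, j <= al (inl x) /\ sat w al a (i + j)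
  | PGle y a => forall j, j <= al (inr y) -> sat w al a (i + j)
  end.

Definition is_pltlG (f : form) : Prop :=
  forall v, v \in vars f -> exists y, v = inr y.

Fixpoint proj_y (y : Y) (f : form) : form :=
  match f with
  | PAtom p => PAtom p
  | PNAtom p => PNAtom p
  | PAnd a b => PAnd (proj_y y a) (proj_y y b)
  | POr a b => POr (proj_y y a) (proj_y y b)
  | PNext a => PNext (proj_y y a)
  | PUntil a b => PUntil (proj_y y a) (proj_y y b)
  | PRel a b => PRel (proj_y y a) (proj_y y b)
  | PFle x a => PFle x (proj_y y a)
  | PGle z a => if z == y then PGle z (proj_y y a) else proj_y y a
  end.

End PLTL.

(* Finite arena: own v = false means v in V_0 (Player 0), true means v in V_1.
   Every vertex has a successor (standard for arenas with infinite plays). *)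
Record arena (P : Type) := Arena {
  vert : finType;
  own : vert -> bool;
  edge : rel vert;
  init : vert;
  lab : vert -> P -> bool;
  edge_total : forall v, exists v', edge v v'
}.
Arguments vert {P} a. Arguments own {P} a _. Arguments edge {P} a _ _.
Arguments init {P} a. Arguments lab {P} a _ _.

Section Game.
Variables (P : Type) (X Y : eqType) (A : arena P).
Notation V := (vert A).

Definition strategy := seq V -> V.

Definition legal (s : strategy) : Prop :=
  forall (h : seq V) (v : V), own A (last v h) = false ->
    edge A (last v h) (s (v :: h)).

Definition prefix (r : nat -> V) (n : nat) : seq V := map r (iota 0 n.+1).

Definition consistent (s : strategy) (r : nat -> V) : Prop :=
  r 0 = init A /\
  (forall n, edge A (r n) (r n.+1)) /\
  (forall n, own A (r n) = false -> r n.+1 = s (prefix r n)).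

Definition valuation (f : pltl P X Y) := {v : (X + Y)%type | v \in vars f} -> nat.

Definition extend (f : pltl P X Y) (b : valuation f) : (X + Y)%type -> nat :=
  fun v => match insub v with Some s => b s | None => 0 end.

Definition W0 (f : pltl P X Y) (b : valuation f) : Prop :=
  exists s : strategy, legal s /\
    forall r, consistent s r -> sat (fun n => lab A (r n)) (extend b) f 0.

End Game.

Definition infinite_set (T : Type) (S : T -> Prop) : Prop :=
  ~ exists l : list T, forall t, S t -> List.In t l.

From mathcomp Require Import all_boot.
From Stdlib Require Import Classical FunctionalExtensionality Setoid.
From Stdlib Require List.
Set Implicit Arguments. Unset Strict Implicit. Unset Printing Implicit Defensive.

(* The proof rests on two semantic facts about PLTL.
   (1) Monotonicity: enlarging the bound of an F_{<=x} or shrinking the bound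
       of a G_{<=y} can only make a formula easier to satisfy (sat_laxer).
   (2) Projection: phi_y evaluated under a valuation alpha is phi evaluated
       under alpha with every G-variable z <> y set to 0, because G_{<=0} psi
       is equivalent to psi (sat_proj_y).
   Since a strategy winning for an objective wins for every weaker objective,
   both facts lift to the games (W0_laxer, W0_proj_of_W0, W0_of_W0_proj).
   Finally, a set of valuations is infinite as soon as one coordinate is
   unbounded on it, and finite as soon as all coordinates are bounded
   (valuations have a finite domain).  For PLTL_G:
   - if some G_y is won for all values of y, the valuations "y := N, other
     variables := 0" are winning for every N, so W0 is infinite;
   - otherwise every y has a losing value N_y in G_y, which bounds the
     y-coordinate of every winning valuation of phi, so W0 is finite.
   For a formula with some F_{<=x}, raising x in a winning valuation keeps it
   winning, so a non-empty W0 is infinite. *)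

Section Finiteness.

Lemma in_In (T : eqType) (t : T) (s : seq T) : t \in s -> List.In t s.
Proof.
elim: s => [|u s IH] //=; rewrite inE => /orP [/eqP ->|/IH]; by [left|right].
Qed.

Lemma leq_sumn_In (T : Type) (g : T -> nat) (l : list T) (t : T) :
  List.In t l -> g t <= sumn (map g l).
Proof.
elim: l => //= u l IH [->|/IH]; first exact: leq_addr.
by move/leq_trans; apply; exact: leq_addl.
Qed.

Lemma unbounded_infinite (T : Type) (S : T -> Prop) (g : T -> nat) :
  (forall N, exists2 t, S t & N <= g t) -> infinite_set S.
Proof.
move=> unbounded [l Sl]; have [t St] := unbounded (sumn (map g l)).+1.
by rewrite ltnNge (leq_sumn_In g (Sl t St)).
Qed.

Lemma infinite_nonempty (T : Type) (S : T -> Prop) :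
  infinite_set S -> exists t, S t.
Proof.
move=> infS; apply: NNPP => noS; apply: infS; exists nil => t St.
by apply: noS; exists t.
Qed.

(* On a finite domain (enumerated by [e]) there are finitely many functions
   into nat bounded by [N]: each is decoded from its table of values. *)
Lemma bounded_maps_finite (T : eqType) (e : seq T) (N : nat) :
  (forall t, t \in e) ->
  exists l : list (T -> nat), forall f, (forall t, f t < N) -> List.In f l.
Proof.
move=> e_full.
pose decode (c : (size e).-tuple 'I_N) (t : T) := nth 0 (map val c) (index t e).
exists (map decode (enum {: (size e).-tuple 'I_N})) => f f_bounded.
pose table := map_tuple (fun t => Ordinal (f_bounded t)) (in_tuple e).
have -> : f = decode table.
  apply: functional_extensionality => t.
  by rewrite /decode /= -map_comp (nth_map t) ?index_mem ?nth_index.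
by apply: List.in_map; apply: in_In; rewrite mem_enum.
Qed.

Lemma common_bound (T : eqType) (s : seq T) (Q : T -> nat -> Prop) :
  (forall t n m, n <= m -> Q t n -> Q t m) ->
  (forall t, t \in s -> exists n, Q t n) ->
  exists N, forall t, t \in s -> Q t N.
Proof.
move=> Q_up; elim: s => [|u s IH] Q_ex; first by exists 0.
have [n Qun] := Q_ex u (mem_head _ _).
have [N QsN] := IH (fun t st => Q_ex t (mem_behead (s := u :: s) st)).
exists (maxn n N) => t; rewrite inE => /orP [/eqP ->|st].
  exact: Q_up (leq_maxl _ _) Qun.
exact: Q_up (leq_maxr _ _) (QsN t st).
Qed.

End Finiteness.

Lemma prop_in_cat (T : eqType) (Q : T -> Prop) (s1 s2 : seq T) :
  {in s1 ++ s2, forall t, Q t} -> {in s1, forall t, Q t} /\ {in s2, forall t, Q t}.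
Proof. by move=> Qs; split=> t st; apply: Qs; rewrite mem_cat st ?orbT. Qed.

Lemma prop_in_cons (T : eqType) (Q : T -> Prop) (u : T) (s : seq T) :
  {in u :: s, forall t, Q t} -> Q u /\ {in s, forall t, Q t}.
Proof. by move=> Qs; split=> [|t st]; apply: Qs; rewrite inE ?eqxx ?st ?orbT. Qed.

Section Semantics.
Variables (P : Type) (X Y : eqType) (w : nat -> P -> bool).
Notation form := (pltl P X Y).

(* [n] is at least as lax a bound as [n'] for the variable [v]: a longer
   deadline for an F-variable, a shorter horizon for a G-variable. *)
Definition laxer_at (v : X + Y) (n n' : nat) : Prop :=
  if v is inl _ then n' <= n else n <= n'.

Lemma laxer_at_refl (v : X + Y) (n : nat) : laxer_at v n n.
Proof. by case: v => /=. Qed.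

Lemma sat_laxer (f : form) (al al' : X + Y -> nat) :
  {in vars f, forall v, laxer_at v (al v) (al' v)} ->
  forall i, sat w al' f i -> sat w al f i.
Proof.
elim: f => [p|p|a IHa b IHb|a IHa b IHb|a IHa|a IHa b IHb|a IHa b IHb|x a IHa|y a IHa]
  /=; try by move=> _ i.
- by move=> /prop_in_cat[/IHa Ha /IHb Hb] i [/Ha ? /Hb ?].
- by move=> /prop_in_cat[/IHa Ha /IHb Hb] i [/Ha|/Hb]; [left|right].
- by move=> /IHa Ha i /Ha.
- move=> /prop_in_cat[/IHa Ha /IHb Hb] i [k [ik [/Hb bk before_k]]].
  by exists k; split=> //; split=> // j ij jk; apply/Ha/before_k.
- move=> /prop_in_cat[/IHa Ha /IHb Hb] i release k ik.
  have [/Hb|[j [ij [jk /Ha aj]]]] := release k ik; first by left.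
  by right; exists j.
- move=> /prop_in_cons[lax_x /IHa Ha] i [j [j_le /Ha aj]].
  by exists j; split=> //; exact: leq_trans lax_x.
- move=> /prop_in_cons[lax_y /IHa Ha] i always j j_le.
  by apply/Ha/always; exact: leq_trans lax_y.
Qed.

Definition zero_except (y : Y) (al : X + Y -> nat) (v : X + Y) : nat :=
  if v is inr z then (if z == y then al v else 0) else al v.

(* phi_y means phi with the G-bounds other than y set to 0, since G_{<=0} psi
   is equivalent to psi. *)
Lemma sat_proj_y (f : form) (y : Y) (al : X + Y -> nat) (i : nat) :
  sat w al (proj_y y f) i <-> sat w (zero_except y al) f i.
Proof.
elim: f i => [p|p|a IHa b IHb|a IHa b IHb|a IHa|a IHa b IHb|a IHa b IHb|x a IHa|z a IHa]
  i /=; try (setoid_rewrite IHa); try (setoid_rewrite IHb); try reflexivity.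
case: eqP => [->|_] /=; first by setoid_rewrite IHa.
rewrite IHa; split=> [a_i j|/(_ 0 (leqnn 0))]; last by rewrite addn0.
by rewrite leqn0 => /eqP ->; rewrite addn0.
Qed.

Lemma mem_proj_y (f : form) (y : Y) :
  inr y \in vars f -> inr y \in vars (proj_y y f).
Proof.
elim: f => [p|p|a IHa b IHb|a IHa b IHb|a IHa|a IHa b IHb|a IHa b IHb|x a IHa|z a IHa]
  /=; rewrite ?mem_cat ?inE //; try by case/orP=> [/IHa->|/IHb->]; rewrite ?orbT.
case: (eqVneq z y) => [->|z_neq_y] /=; first by rewrite inE eqxx.
by case/orP=> [/eqP [z_eq_y]|/IHa //]; rewrite z_eq_y eqxx in z_neq_y.
Qed.

End Semantics.

Section Games.
Variables (P : Type) (X Y : eqType) (A : arena P).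
Notation form := (pltl P X Y).

Lemma extend_in (f : form) (b : valuation f) (v : X + Y) (fv : v \in vars f) :
  extend b v = b (exist _ v fv).
Proof. by rewrite /extend insubT. Qed.

Lemma W0_transfer (f g : form) (b : valuation f) (c : valuation g) :
  (forall w, sat w (extend b) f 0 -> sat w (extend c) g 0) -> W0 A b -> W0 A c.
Proof. by move=> weaker [s [legal_s wins]]; exists s; split=> // r /wins /weaker. Qed.

Lemma W0_laxer (f : form) (b b' : valuation f) :
  (forall s, laxer_at (val s) (b s) (b' s)) -> W0 A b' -> W0 A b.
Proof.
move=> lax; apply: W0_transfer => w; apply: sat_laxer => v fv.
by rewrite !(extend_in _ fv); exact: lax.
Qed.

Section PLTLG.
Variables (phi : form) (y : Y).
Hypothesis phiG : is_pltlG phi.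

Lemma W0_proj_of_W0 (b : valuation phi) (c : valuation (proj_y y phi)) :
  extend c (inr y) <= extend b (inr y) -> W0 A b -> W0 A c.
Proof.
move=> c_le_b; apply: W0_transfer => w b_wins; apply/sat_proj_y.
apply: sat_laxer b_wins => v /phiG [z ->] /=.
by case: eqP => [->|].
Qed.

Lemma W0_of_W0_proj (b : valuation phi) (c : valuation (proj_y y phi)) :
  extend b (inr y) <= extend c (inr y) ->
  (forall z, z != y -> extend b (inr z) = 0) -> W0 A c -> W0 A b.
Proof.
move=> b_le_c b_zero; apply: W0_transfer => w /sat_proj_y.
apply: sat_laxer => v /phiG [z ->] /=.
by case: eqP => [->|/eqP z_neq_y] //; rewrite b_zero.
Qed.

Lemma W0_infinite_of_proj (yphi : inr y \in vars phi) :
  (forall c : valuation (proj_y y phi), W0 A c) -> infinite_set (W0 A (f:=phi)).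
Proof.
move=> proj_wins.
apply: (@unbounded_infinite _ _ (fun b : valuation phi => extend b (inr y))) => N.
pose bN : valuation phi := fun s => if val s == inr y then N else 0.
have bN_y : extend bN (inr y) = N by rewrite (extend_in _ yphi) /bN /= eqxx.
exists bN; last by rewrite bN_y.
apply: (W0_of_W0_proj (c := fun _ => N)) => //.
  by rewrite bN_y (extend_in _ (mem_proj_y yphi)).
move=> z z_neq_y; rewrite /extend; case: insubP => // s _ sz.
by rewrite /bN sz; case: eqP => // [[z_eq_y]]; rewrite z_eq_y eqxx in z_neq_y.
Qed.

Lemma W0_bounded_of_proj (c : valuation (proj_y y phi)) :
  ~ W0 A c -> forall b : valuation phi, W0 A b -> extend b (inr y) < extend c (inr y).
Proof.
by move=> c_loses b b_wins; rewrite ltnNge; apply/negP => c_le_b;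
  apply/c_loses/(W0_proj_of_W0 c_le_b).
Qed.

End PLTLG.

(* If W0 is infinite, some G_y is won for all values of y: otherwise each y
   has a losing value bounding the y-coordinate of W0, and W0 is finite. *)
Lemma proj_winning_of_W0_infinite (phi : form) : is_pltlG phi ->
  infinite_set (W0 A (f:=phi)) ->
  exists y : Y, inr y \in vars phi /\ forall c : valuation (proj_y y phi), W0 A c.
Proof.
move=> phiG infW; apply: NNPP => no_proj; apply: infW.
pose bounds v N := forall b : valuation phi, W0 A b -> extend b v < N.
have [N all_bounded] : exists N, forall v, v \in vars phi -> bounds v N.
  apply: common_bound => [v n m le_nm bnd b /bnd /leq_trans|v fv]; first exact.
  have [y v_eq] := phiG v fv; subst v.
  have [c c_loses] : exists c : valuation (proj_y y phi), ~ W0 A c.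
    by apply: not_all_ex_not => all_win; apply: no_proj; exists y.
  by exists (extend c (inr y)); exact: W0_bounded_of_proj.
have vars_enum (s : {v | v \in vars phi}) : s \in pmap insub (vars phi).
  by rewrite mem_pmap_sub; exact: valP.
have [l l_full] := bounded_maps_finite N vars_enum.
exists l => b b_wins; apply: l_full => s.
by case: s => v fv; rewrite -(extend_in _ fv); exact: all_bounded fv _ b_wins.
Qed.

(* With an F-variable x, a non-empty W0 is infinite: raising x in a winning
   valuation keeps it winning. *)
Lemma W0_infinite_of_F (phi : form) (x : X) : inl x \in vars phi ->
  forall b : valuation phi, W0 A b -> infinite_set (W0 A (f:=phi)).
Proof.
move=> xphi b b_wins.
apply: (@unbounded_infinite _ _ (fun b : valuation phi => extend b (inl x))) => N.
pose bN : valuation phi := fun s => if val s == inl x then b s + N else b s.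
exists bN; last by rewrite (extend_in _ xphi) /bN /= eqxx leq_addl.
apply: W0_laxer b_wins => s; rewrite /bN.
by case: eqP => [->|_]; [exact: leq_addr|exact: laxer_at_refl].
Qed.

End Games.

Theorem mainTheorem5 :
  (forall (P : Type) (X Y : eqType) (A : arena P) (phi : pltl P X Y),
     is_pltlG phi -> vars phi <> [::] ->
     (infinite_set (W0 A (f:=phi)) <->
      exists y : Y, inr y \in vars phi /\
        forall b : valuation (proj_y y phi), W0 A b)) /\
  (forall (P : Type) (X Y : eqType) (A : arena P) (phi : pltl P X Y),
     (exists x : X, inl x \in vars phi) ->
     (infinite_set (W0 A (f:=phi)) <-> exists b : valuation phi, W0 A b)).
Proof.
split=> [P X Y A phi phiG _|P X Y A phi [x xphi]]; split.
- exact: proj_winning_of_W0_infinite.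
- by case=> y [yphi proj_wins]; exact: W0_infinite_of_proj phiG yphi proj_wins.
- exact: infinite_nonempty.
- by case=> b b_wins; exact: (W0_infinite_of_F xphi b_wins).
Qed.
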